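(* Let $F=\{T_1,\dots,T_m\}$ be a random forest on $X_n$ and $\vec x\in\{0,1\}^n$ an instance with $F(\vec x)=1$. Let $y_1,\dots,y_m$ be fresh variables, and consider the Partial MaxSAT instance $(C_{\mathrm{soft}},C_{\mathrm{hard}})$ with $$C_{\mathrm{soft}}=\{\overline x_i: x_i\in t_{\vec x}\}\cup\{x_i:\overline x_i\in t_{\vec x}\}\quad(\text{unit clauses}),$$ $$C_{\mathrm{hard}}=\{(\overline y_i\vee c_{\mid\vec x}): i\in[m],\ c\in\mathrm{CNF}(T_i)\}\cup \mathrm{CNF}\Big(\sum_{i=1}^m y_i>\frac m2\Big),$$ where $c_{\mid\vec x}=c\cap t_{\vec x}$ is the clause consisting of those literals of $c$ that belong to $t_{\vec x}$, and $\mathrm{CNF}(\sum_{i=1}^m y_i>\frac m2)$ is a CNF encoding of the cardinality constraint $\sum_i y_i>\frac m2$ (over $y_1,\dots,y_m$ and possibly further fresh auxiliary variables, whose projection onto $y_1,\dots,y_m$ is equivalent to the constraint). If $\vec z^*$ is an optimal solution of $(C_{\mathrm{soft}},C_{\mathrm{hard}})$, then the term $t_{\vec x}\cap t_{\vec z^*}$ (the set of literals of $t_{\vec x}$ that are true under $\vec z^*$) is a minimal majoritary reason for $\vec x$ given $F$.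
   Context: A (Boolean) decision tree on $X_n=\{x_1,\dots,x_n\}$ is a binary tree whose internal nodes are labeled by variables of $X_n$ (each variable occurring at most once on any root-to-leaf path) and whose leaves are labeled $0$ or $1$; its value $T(\vec x)$ is the label of the leaf reached by going left (resp. right) at a node labeled $x_i$ when $x_i=0$ (resp. $1$). $\mathrm{CNF}(T)$ is the CNF formula whose clauses are the negations of the terms describing the root-to-leaf paths of $T$ ending in a $0$-leaf; it is equivalent to $T$. A random forest $F=\{T_1,\dots,T_m\}$ has value $F(\vec x)=1$ iff $\frac1m\sum_i T_i(\vec x)>\frac12$. $[m]=\{1,\dots,m\}$. For an assignment $\vec z$, $t_{\vec z}=\bigwedge_i x_i^{z_i}$ with $x_i^1=x_i$, $x_i^0=\overline x_i$ (terms are treated as sets of literals). A term $t$ covers $\vec x$ if $t\subseteq t_{\vec x}$; an implicant of a Boolean function $f$ is a term $t$ with $f(\vec z)=1$ for all $\vec z$ covered by $t$. A majoritary reason for $\vec x$ given $F$ (with $F(\vec x)=1$) is a term $t$ covering $\vec x$ that is an implicant of at least $\lfloor m/2\rfloor+1$ trees $T_i$, and such that for every $l\in t$, $t\setminus\{l\}$ is not; a minimal majoritary reason is one of minimum size. A Partial MaxSAT instance $(C_{\mathrm{soft}},C_{\mathrm{hard}})$ consists of two finite sets of clauses; an optimal solution is an assignment satisfying all clauses of $C_{\mathrm{hard}}$ and maximizing the number of satisfied clauses of $C_{\mathrm{soft}}$. *)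

From mathcomp Require Import all_boot.
Set Implicit Arguments. Unset Strict Implicit. Unset Printing Implicit Defensive.

(* Variables x_1..x_n are indexed by 'I_n.  A literal (i, b) stands for
   x_i^b: (i, true) is x_i and (i, false) is the negation of x_i. *)
Definition lit (n : nat) := ('I_n * bool)%type.
Definition neg_lit n (l : lit n) : lit n := (l.1, ~~ l.2).

Inductive dtree (n : nat) : Type :=
| Leaf of bool
| Node of 'I_n & dtree n & dtree n.
Arguments Leaf {n}.

Fixpoint wf_aux n (seen : seq 'I_n) (T : dtree n) : bool :=
  match T with
  | Leaf _ => true
  | Node i l r => (i \notin seen) && wf_aux (i :: seen) l && wf_aux (i :: seen) r
  end.
Definition wf_tree n (T : dtree n) := wf_aux [::] T.

Fixpoint deval n (T : dtree n) (z : 'I_n -> bool) : bool :=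
  match T with
  | Leaf b => b
  | Node i l r => if z i then deval r z else deval l z
  end.

Fixpoint zero_paths n (T : dtree n) : seq (seq (lit n)) :=
  match T with
  | Leaf b => if b then [::] else [:: [::]]
  | Node i l r => map (cons (i, false)) (zero_paths l)
                  ++ map (cons (i, true)) (zero_paths r)
  end.

(* CNF(T): clauses (disjunctions of literals) = negations of the 0-path terms *)
Definition tcnf n (T : dtree n) : seq (seq (lit n)) :=
  map (map (@neg_lit n)) (zero_paths T).

(* random forest F = {T_1,...,T_m}: F(x)=1 iff (1/m) sum T_i(x) > 1/2 *)
Definition rf_eval n m (F : 'I_m -> dtree n) (z : 'I_n -> bool) : bool :=
  m < 2 * #|[set i | deval (F i) z]|.

Definition tvec n (z : 'I_n -> bool) : {set lit n} := [set (i, z i) | i : 'I_n].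
Definition covers n (t : {set lit n}) (z : 'I_n -> bool) := t \subset tvec z.
Definition implicant n (f : ('I_n -> bool) -> bool) (t : {set lit n}) :=
  forall z : 'I_n -> bool, covers t z -> f z.

Definition maj_implicant n m (F : 'I_m -> dtree n) (t : {set lit n}) :=
  exists S : {set 'I_m}, m./2.+1 <= #|S| /\ forall i, i \in S -> implicant (deval (F i)) t.

Definition majoritary_reason n m (F : 'I_m -> dtree n) (x : 'I_n -> bool) (t : {set lit n}) :=
  [/\ covers t x, maj_implicant F t &
      forall l, l \in t -> ~ maj_implicant F (t :\ l)].

Definition minimal_majoritary_reason n m (F : 'I_m -> dtree n) (x : 'I_n -> bool)
    (t : {set lit n}) :=
  majoritary_reason F x t /\
  forall t', majoritary_reason F x t' -> #|t| <= #|t'|.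

Definition clause (V : Type) := seq (V * bool).
Definition sat_clause V (z : V -> bool) (c : clause V) : bool :=
  has (fun l => z l.1 == l.2) c.
Definition sat_all V (z : V -> bool) (C : seq (clause V)) : bool :=
  all (sat_clause z) C.
Definition optimal_solution V (Csoft Chard : seq (clause V)) (z : V -> bool) :=
  sat_all z Chard /\
  forall z' : V -> bool, sat_all z' Chard ->
    count (sat_clause z') Csoft <= count (sat_clause z) Csoft.

(* MaxSAT variables: x_1..x_n (inl), y_1..y_m (inr (inl)), auxiliary (inr (inr)) *)
Definition mvar (n m : nat) (A : Type) := ('I_n + ('I_m + A))%type.

Definition Csoft n m (A : Type) (x : 'I_n -> bool) : seq (clause (mvar n m A)) :=
  [seq [:: (inl i, ~~ x i)] | i <- enum 'I_n].

Definition restrict n (x : 'I_n -> bool) (c : seq (lit n)) : seq (lit n) :=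
  [seq l <- c | l \in tvec x].

Definition Chard n m (A : Type) (F : 'I_m -> dtree n) (x : 'I_n -> bool)
    (Ccard : seq (clause ('I_m + A))) : seq (clause (mvar n m A)) :=
  flatten [seq [seq (inr (inl i), false) :: [seq (inl l.1, l.2) | l <- restrict x c]
               | c <- tcnf (F i)] | i <- enum 'I_m]
  ++ [seq [seq (inr l.1, l.2) | l <- c] | c <- Ccard].

Definition card_encoding m (A : Type) (Ccard : seq (clause ('I_m + A))) :=
  forall y : 'I_m -> bool,
    (exists a : A -> bool,
        sat_all (fun v => match v with inl j => y j | inr b => a b end) Ccard)
    <-> m < 2 * #|[set i | y i]|.

From mathcomp Require Import all_boot zify.

Set Implicit Arguments. Unset Strict Implicit. Unset Printing Implicit Defensive.

(* An assignment z satisfies C_hard iff the trees i with y_i true form a strict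
   majority and, for each of them, t_x ∩ t_z meets every clause of CNF(T_i); for a
   tree with no variable repeated along a path this says exactly that t_x ∩ t_z is
   an implicant of T_i.  Conversely every majoritary implicant t of t_x arises as
   t_x ∩ t_z (flip x outside t, set y to the majority).  Since z falsifies exactly
   |t_x ∩ t_z| soft clauses, an optimal z minimises this size over all majoritary
   implicants covering x, and a minimum-size one is in particular subset-minimal. *)

Lemma map_uniq_inj_in (T1 T2 : eqType) (f : T1 -> T2) (s : seq T1) :
  uniq (map f s) -> {in s &, injective f}.
Proof.
elim: s => //= a s IHs /andP [fa_notin uniq_fs] u v.
rewrite !inE => /predU1P [-> | us] /predU1P [-> | vs] // fuv.
- by rewrite fuv (map_f f vs) in fa_notin.
- by rewrite -fuv (map_f f us) in fa_notin.
- exact: IHs.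
Qed.

Lemma eq_sat_all (V : Type) (z1 z2 : V -> bool) (C : seq (clause V)) :
  z1 =1 z2 -> sat_all z1 C = sat_all z2 C.
Proof. by move=> z12; apply: eq_all => c; apply: eq_has => l; rewrite /= z12. Qed.

Lemma card_set_count (T : finType) (P : pred T) : #|[set i | P i]| = count P (enum T).
Proof. by rewrite enumT cardsE cardE /enum_mem size_filter. Qed.

Section Terms.

Variable n : nat.
Implicit Types (x z : 'I_n -> bool) (l : lit n) (p : seq (lit n)) (t : {set lit n}).

Lemma mem_tvec z j b : ((j, b) \in tvec z) = (z j == b).
Proof. by apply/imsetP/eqP => [[i _ [-> ->]] | <-] //; exists j. Qed.

Lemma neg_lit_tvec z l : (neg_lit l \in tvec z) = (l \notin tvec z).
Proof. by case: l => j b; rewrite /neg_lit !mem_tvec; case: b; case: (z j). Qed.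

Lemma neg_litK : involutive (@neg_lit n).
Proof. by case=> j b; rewrite /neg_lit negbK. Qed.

Lemma consistent_term_extend x p : uniq (map fst p) ->
  exists2 z, all (mem (tvec z)) p &
    forall l, l \in tvec x -> neg_lit l \notin p -> l \in tvec z.
Proof.
move=> /map_uniq_inj_in fst_inj.
exists (fun j => if (j, ~~ x j) \in p then ~~ x j else x j).
- apply/allP => -[j b] jb_p; rewrite /= mem_tvec.
  case: ifP => [flip_p | /negbT flip_notin].
  + by case: (fst_inj _ _ jb_p flip_p erefl) => ->.
  + by apply: contraNT flip_notin; case: b jb_p; case: (x j).
- case=> j b; rewrite /neg_lit !mem_tvec /= => /eqP <-.
  by case: ifP => // ->.
Qed.

Definition flip_outside x t j := if (j, x j) \in t then x j else ~~ x j.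

Lemma tvecI_flip_outside x t : t \subset tvec x -> tvec x :&: tvec (flip_outside x t) = t.
Proof.
move/subsetP => t_x; apply/setP => -[j b]; rewrite in_setI !mem_tvec /flip_outside.
case: (eqVneq (x j) b) => [<- | x_b] /=.
- by case: ifP; case: (x j).
- by apply/esym/negbTE; apply: contra x_b => /t_x; rewrite mem_tvec.
Qed.

Lemma deval_zero_path (T : dtree n) z p :
  p \in zero_paths T -> all (mem (tvec z)) p -> ~~ deval T z.
Proof.
elim: T p => [b | i l IHl r IHr] p /=; first by case: b.
rewrite mem_cat => /orP [] /mapP [q q_path ->] /= /andP [/[!mem_tvec] /eqP -> q_z].
- exact: IHl q_path q_z.
- exact: IHr q_path q_z.
Qed.

Lemma zero_path_of_deval (T : dtree n) z :
  ~~ deval T z -> exists2 p, p \in zero_paths T & all (mem (tvec z)) p.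
Proof.
elim: T => [b | i l IHl r IHr] /=; first by move/negPf->; exists [::]; rewrite ?inE.
case z_i: (z i).
- case/IHr => p p_path p_z; exists ((i, true) :: p); last by rewrite /= mem_tvec z_i.
  by rewrite mem_cat map_f ?orbT.
- case/IHl => p p_path p_z; exists ((i, false) :: p); last by rewrite /= mem_tvec z_i.
  by rewrite mem_cat map_f.
Qed.

Lemma zero_path_uniq seen (T : dtree n) p : uniq seen -> wf_aux seen T ->
  p \in zero_paths T -> uniq (map fst p ++ seen).
Proof.
elim: T seen p => [b | i l IHl r IHr] seen p /=.
  by case: b; rewrite ?inE // => ? _ /eqP ->.
move=> seen_uniq /andP [/andP [i_new wf_l] wf_r].
have iseen_uniq : uniq (i :: seen) by rewrite /= i_new.
rewrite mem_cat => /orP [] /mapP [q q_path ->]; rewrite map_cons cat_cons -cat1s uniq_catCA.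
- exact: IHl q_path.
- exact: IHr q_path.
Qed.

Lemma implicant_of_tcnf (T : dtree n) t :
  all (has (mem t)) (tcnf T) -> implicant (deval T) t.
Proof.
move=> clauses_t z /subsetP t_z; apply/negPn/negP => /zero_path_of_deval [p p_path p_z].
have := allP clauses_t _ (map_f (map (@neg_lit n)) p_path).
rewrite has_map => /hasP [l l_p /t_z]; rewrite /= neg_lit_tvec => /negP; apply.
exact: (allP p_z).
Qed.

Lemma tcnf_of_implicant (T : dtree n) x t : wf_tree T -> t \subset tvec x ->
  implicant (deval T) t -> all (has (mem t)) (tcnf T).
Proof.
move=> wf_T /subsetP t_x t_imp; apply/allP => _ /mapP [p p_path ->].
apply: contraT; rewrite has_map => /hasPn p_t.
have p_uniq : uniq (map fst p) by rewrite -[map _ _]cats0 (zero_path_uniq _ wf_T p_path).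
have [z p_z x_z] := consistent_term_extend x p_uniq.
suff : deval T z by rewrite (negPf (deval_zero_path p_path p_z)).
apply: t_imp; apply/subsetP => l l_t; apply: x_z (t_x _ l_t) _.
by apply/negP => /p_t; rewrite /= neg_litK l_t.
Qed.

End Terms.

Section Encoding.

Variables (n m : nat) (A : Type) (F : 'I_m -> dtree n) (x : 'I_n -> bool).
Variable Ccard : seq (clause ('I_m + A)).
Implicit Types (z : mvar n m A -> bool) (t : {set lit n}).

Definition agreement z : {set lit n} := tvec x :&: tvec (fun j => z (inl j)).

Lemma sat_tree_clause z i c :
  sat_clause z ((inr (inl i), false) :: [seq (inl l.1, l.2) | l <- restrict x c])
  = z (inr (inl i)) ==> has (mem (agreement z)) c.
Proof.
rewrite /sat_clause /= has_map /restrict has_count count_filter -has_count.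
case: (z _) => //=; apply: eq_has => -[j b]; rewrite /= in_setI !mem_tvec.
by rewrite andbC.
Qed.

Lemma sat_card_clauses z :
  all (sat_clause z) [seq [seq (inr l.1, l.2) | l <- c] | c <- Ccard] =
  sat_all (z \o inr) Ccard.
Proof. by rewrite /sat_all all_map; apply: eq_all => c; rewrite /= /sat_clause has_map. Qed.

Lemma sat_ChardP z :
  reflect ((forall i, z (inr (inl i)) -> all (has (mem (agreement z))) (tcnf (F i)))
           /\ sat_all (z \o inr) Ccard)
          (sat_all z (Chard F x Ccard)).
Proof.
rewrite [sat_all z _]/sat_all /Chard all_cat sat_card_clauses.
apply: (iffP andP) => -[trees_z card_z]; split => //.
- move=> i z_i; apply/allP => c c_i.
  by have := all_allpairsP trees_z i c (mem_enum _ i) c_i; rewrite sat_tree_clause z_i.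
- apply/all_allpairsP => i c _ c_i; rewrite sat_tree_clause.
  by apply/implyP => /trees_z/allP; apply.
Qed.

Lemma maj_implicant_of_sat_Chard z : card_encoding Ccard ->
  sat_all z (Chard F x Ccard) -> maj_implicant F (agreement z).
Proof.
move=> card_enc /sat_ChardP [trees_z card_z].
exists [set i | z (inr (inl i))]; split.
- rewrite ltn_half_double -mul2n; apply/(card_enc (fun i => z (inr (inl i)))).
  exists (fun a => z (inr (inr a))).
  by rewrite -(eq_sat_all _ (z1 := z \o inr)) => // -[].
- by move=> i; rewrite inE => /trees_z /implicant_of_tcnf.
Qed.

Lemma sat_Chard_of_maj_implicant t : (forall i, wf_tree (F i)) -> card_encoding Ccard ->
  t \subset tvec x -> maj_implicant F t ->
  exists2 z, sat_all z (Chard F x Ccard) & agreement z = t.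
Proof.
move=> wf_F card_enc t_x [S [S_maj S_imp]].
have [a card_a] : exists a : A -> bool,
    sat_all (fun v => match v with inl i => i \in S | inr b => a b end) Ccard.
  apply/card_enc; rewrite mul2n -ltn_half_double (_ : [set i | i \in S] = S) //.
  by apply/setP => i; rewrite inE.
pose z v := match v with
  | inl j => flip_outside x t j
  | inr (inl i) => i \in S
  | inr (inr b) => a b
  end.
have z_t : agreement z = t by exact: tvecI_flip_outside.
exists z => //; apply/sat_ChardP; split; last exact: card_a.
by move=> i i_S; rewrite z_t; exact: tcnf_of_implicant (wf_F i) t_x (S_imp i i_S).
Qed.

Lemma count_sat_Csoft z : count (sat_clause z) (Csoft m A x) + #|agreement z| = n.
Proof.
have -> : agreement z = [set (j, x j) | j in [set j | z (inl j) == x j]].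
  apply/setP => -[j b]; rewrite in_setI !mem_tvec.
  apply/andP/imsetP => [[/eqP <- z_x] | [i]]; first by exists j; rewrite ?inE.
  by rewrite inE => z_x [-> ->]; rewrite eqxx.
rewrite card_imset ?card_set_count; last by move=> i j [].
rewrite -[n in _ = n]size_enum_ord -(count_predC (fun j => z (inl j) == x j)) addnC.
congr (_ + _); rewrite count_map; apply: eq_count => j.
by rewrite /sat_clause /= orbF; case: (z _); case: (x j).
Qed.

Lemma optimal_agreement_min z t : (forall i, wf_tree (F i)) -> card_encoding Ccard ->
  optimal_solution (Csoft m A x) (Chard F x Ccard) z ->
  t \subset tvec x -> maj_implicant F t -> #|agreement z| <= #|t|.
Proof.
move=> wf_F card_enc [_ z_opt] t_x t_maj.
have [z' z'_hard <-] := sat_Chard_of_maj_implicant wf_F card_enc t_x t_maj.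
have := z_opt z' z'_hard; have := count_sat_Csoft z; have := count_sat_Csoft z'.
lia.
Qed.

End Encoding.

Lemma minimal_majoritary_reason_of_min n m (F : 'I_m -> dtree n) x t :
  covers t x -> maj_implicant F t ->
  (forall t', covers t' x -> maj_implicant F t' -> #|t| <= #|t'|) ->
  minimal_majoritary_reason F x t.
Proof.
move=> t_x t_maj t_min; split; last by move=> t' [t'_x t'_maj _]; exact: t_min.
split => // l l_t tl_maj.
have := t_min _ (subset_trans (subD1set t l) t_x) tl_maj.
by rewrite (cardsD1 l t) l_t add1n ltnn.
Qed.

Unset Implicit Arguments. Set Strict Implicit.

Theorem proposition8 (n m : nat) (F : 'I_m -> dtree n) (x : 'I_n -> bool)
    (A : finType) (Ccard : seq (clause ('I_m + A))) (z : mvar n m A -> bool) :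
  (forall i, wf_tree (F i)) ->
  rf_eval F x ->
  card_encoding Ccard ->
  optimal_solution (Csoft m A x) (Chard F x Ccard) z ->
  minimal_majoritary_reason F x (tvec x :&: tvec (fun i => z (inl i))).
Proof.
(* F(x) = 1 only ensures that C_hard is satisfiable, so that an optimal z exists. *)
move=> wf_F _ card_enc z_opt.
apply: minimal_majoritary_reason_of_min => [||t'].
- exact: subsetIl.
- exact: maj_implicant_of_sat_Chard card_enc z_opt.1.
- exact: optimal_agreement_min.
Qed.
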